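(* In the tracking setting, fix $k\geq0$ and assume (i) $\|s_{k+1}-s_k\|_2<\min\big\{r_A,\ r_B,\ \frac{q_B\rho}{\lambda_A\lambda_F}\big\}$; (ii) $\|\bar w_k-w^\ast_k\|_2<q_B\rho$; (iii) $\big(1+\frac{\lambda_H\lambda_B}{\rho}\big)\|\bar w_k-w^\ast_k\|_2+\lambda_H\lambda_B\|s_{k+1}-s_k\|_2<\delta$. Then $$\|\bar w_{k+1}-w^\ast_{k+1}\|_2\leq\beta_w(\rho,M)\|\bar w_k-w^\ast_k\|_2+\beta_s(\rho,M)\|s_{k+1}-s_k\|_2,$$ where $$\beta_w(\rho,M):=C(1+\rho\lambda_G)\Big(1+\frac{\lambda_B\lambda_H}{\rho}\Big)M^{-\psi}+\frac{\lambda_B\lambda_H}{\rho},\qquad \beta_s(\rho,M):=C(1+\rho\lambda_G)\lambda_B\lambda_HM^{-\psi}+\frac{\lambda_B\lambda_H\lambda_A\lambda_F}{\rho}.$$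
   Context: Problem data: $z=(z_1,\dots,z_P)\in\mathbb{R}^{n_z}$; $\mathcal{Z}=\mathcal{Z}_1\times\cdots\times\mathcal{Z}_P$ a product of nonempty bounded boxes; $J(z)=\sum_iJ_i(z_i)$ with polynomials $J_i$; polynomial maps $Q_c:\mathbb{R}^{n_z}\to\mathbb{R}^m$, $g_i:\mathbb{R}^{n_i}\to\mathbb{R}^{q_i}$; $T_i\in\mathbb{R}^{q_i\times p}$; $q=\sum q_i$; $\mathcal{S}\subseteq\mathbb{R}^p$; $G(z,s)=(Q_c(z),g_1(z_1)+T_1s,\dots,g_P(z_P)+T_Ps)$; $L_\rho(z,\mu,s)=J(z)+(\mu+\frac\rho2G(z,s))^\top G(z,s)$; for $w=(z,\mu)$, $F(w,s)=(\nabla J(z)+\nabla_zG(z,s)^\top\mu,\ G(z,s))$; $\mathcal{N}:=\mathcal{N}_{\mathcal{Z}\times\mathbb{R}^{m+q}}$. A KKT point of $(P_s)$: $\min J(z)$ s.t. $G(z,s)=0$, $z\in\mathcal{Z}$, is $w$ with $0\in F(w,s)+\mathcal{N}(w)$. For a reference multiplier $\tilde\mu$: $H^{\tilde\mu}_\rho(w,d,s):=(\nabla J(z)+\nabla_zG(z,s)^\top\mu,\ G(z,s)+d+(\tilde\mu-\mu)/\rho)$. Constants: $\lambda_F:=P\max_i\|T_i\|_2$; $\lambda_H>0$ with $\|H^{\tilde\mu}_\rho(w,d,s)-H^{\tilde\mu}_\rho(w,d',s')\|\le\lambda_H\|(d,s)-(d',s')\|$ for all arguments; $\lambda_G>0$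 a Lipschitz constant of $z\mapsto G(z,s)$ on $\mathcal{Z}$ (independent of $s$). Primal sweep on $L_\rho(\cdot,\mu,s)$: block-coordinate projected-gradient pass over $i=1,\dots,P$ in order, each block update $z_i\leftarrow\pi_{\mathcal{Z}_i}(z_i-\frac1{c_i}\nabla_{z_i}L_\rho)$ (gradient evaluated with already updated preceding blocks) with curvature $c_i$ obtained by backtracking (multiply by $\beta>1$ from an initial $c_i^0>0$) until $f(u)+\frac{\alpha_i}2\|u-z_i\|^2\le f(z_i)+\nabla f(z_i)^\top(u-z_i)+\frac{c_i}2\|u-z_i\|^2$ for the block function $f$, with $\alpha_i>0$. Tracking setting: fix $\rho>0$, $M\ge1$. Given parameters $(s_k)_{k\ge0}\subset\mathcal{S}$ and KKT points $w^\ast_k=(z^\ast_k,\mu^\ast_k)$ of $(P_{s_k})$. Iterates $\bar w_k=(\bar z_k,\bar\mu_k)$ with $\bar z_k\in\mathcal{Z}$ are produced by: $\bar z_{k+1}$ = result of $M$ successive primal sweeps on $L_\rho(\cdot,\bar\mu_k,s_{k+1})$ started at $\bar z_k$; $\bar\mu_{k+1}=\bar\mu_k+\rho G(\bar z_{k+1},s_{k+1})$. Let $z^\infty_k$ be the limit of infinitely many sweeps on $L_\rho(\cdot,\bar\mu_k,s_{k+1})$ started at $\bar z_k$, and $w^\infty_k:=(z^\infty_k,\ \bar\mu_k+\rho G(z^\infty_k,s_{k+1}))$; $d_k:=(\bar\mu_k-\mu^\ast_k)/\rho$. Standing hypotheses, for every $k$: (A) there are constants $r_A,\delta_A,\lambda_A>0$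 (independent of $k$) such that for every $s\in\mathcal{B}(s_k,r_A)\cap\mathcal{S}$ there is a unique $w^\ast(s)\in\mathcal{B}(w^\ast_k,\delta_A)$ with $0\in F(w^\ast(s),s)+\mathcal{N}(w^\ast(s))$, for all $s,s'\in\mathcal{B}(s_k,r_A)\cap\mathcal{S}$ one has $\|w^\ast(s)-w^\ast(s')\|\le\lambda_A\|F(w^\ast(s'),s)-F(w^\ast(s'),s')\|$, and $w^\ast_{k+1}=w^\ast(s_{k+1})$ whenever $\|s_{k+1}-s_k\|<r_A$; (B) there are constants $r_B,q_B,\lambda_B>0$ and $\delta_B\ge\delta_A$ (independent of $k$) such that for all $d\in\mathcal{B}(0,q_B)$, $s\in\mathcal{B}(s_k,r_B)\cap\mathcal{S}$ there is a unique $w^\ast_k(d,s)\in\mathcal{B}(w^\ast_k,\delta_B)$ with $0\in H^{\mu^\ast_k}_\rho(w^\ast_k(d,s),d,s)+\mathcal{N}(w^\ast_k(d,s))$, and $\|w^\ast_k(d,s)-w^\ast_k(d',s')\|\le\lambda_B\|H^{\mu^\ast_k}_\rho(w^\ast_k(d',s'),d,s)-H^{\mu^\ast_k}_\rho(w^\ast_k(d',s'),d',s')\|$ for all such $d,d',s,s'$; (C) there are constants $C>0$, $\delta>0$, $\psi>0$ (independent of $k$) such that the sequence of sweeps defining $z^\infty_k$ converges, $w^\infty_k=w^\ast_k(d_k,s_{k+1})$ whenever $d_k\in\mathcal{B}(0,q_B)$ and $\|s_{k+1}-s_k\|<r_B$, and if $\|\bar z_k-z^\infty_k\|<\delta$ then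 $\|\bar z_{k+1}-z^\infty_k\|\le CM^{-\psi}\|\bar z_k-z^\infty_k\|$. (In the paper, $\psi=\psi(d_L,n_z)=1/(d_L(3d_L-3)^{n_z-1}-2)$ with $d_L$ the degree of the augmented Lagrangian.) *)

From Stdlib Require Import Reals Lra Lia.
Open Scope R_scope.

(** * Finite-dimensional vectors
    A vector of R^n is represented by a function [nat -> R]; only the
    coordinates [0 .. n-1] are meaningful.  All notions below (norms,
    equality [veq], sets, ...) only look at those coordinates. *)
Definition vec := nat -> R.

Fixpoint sumR (n : nat) (f : nat -> R) : R :=
  match n with O => 0 | S n' => sumR n' f + f n' end.

Fixpoint maxR (n : nat) (f : nat -> R) : R :=
  match n with O => 0 | S n' => Rmax (maxR n' f) (f n') end.

Definition vzero : vec := fun _ => 0.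
Definition vadd (x y : vec) : vec := fun i => x i + y i.
Definition vsub (x y : vec) : vec := fun i => x i - y i.
Definition vscal (a : R) (x : vec) : vec := fun i => a * x i.
Definition dot (n : nat) (x y : vec) : R := sumR n (fun i => x i * y i).
Definition norm (n : nat) (x : vec) : R := sqrt (dot n x x).
Definition veq (n : nat) (x y : vec) : Prop := forall i, (i < n)%nat -> x i = y i.
Definition upd (x : vec) (j : nat) (t : R) : vec :=
  fun i => if Nat.eqb i j then t else x i.

Definition pvec := (vec * vec)%type.
Definition psub (x y : pvec) : pvec := (vsub (fst x) (fst y), vsub (snd x) (snd y)).
Definition pdot (n1 n2 : nat) (x y : pvec) : R := dot n1 (fst x) (fst y) + dot n2 (snd x) (snd y).
Definition pnorm (n1 n2 : nat) (x : pvec) : R := sqrt (pdot n1 n2 x x).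
Definition pdist (n1 n2 : nat) (x y : pvec) : R := pnorm n1 n2 (psub x y).
Definition pveq (n1 n2 : nat) (x y : pvec) : Prop := veq n1 (fst x) (fst y) /\ veq n2 (snd x) (snd y).

Definition matvec (c : nat) (T : nat -> nat -> R) (s : vec) : vec :=
  fun r => sumR c (fun l => T r l * s l).

Definition is_opnorm (r c : nat) (T : nat -> nat -> R) (a : R) : Prop :=
  is_lub (fun v => exists x, norm c x <= 1 /\ v = norm r (matvec c T x)) a.

Inductive is_poly (n : nat) : (vec -> R) -> Prop :=
| poly_const (c : R) : is_poly n (fun _ => c)
| poly_var (j : nat) : (j < n)%nat -> is_poly n (fun x => x j)
| poly_add f g : is_poly n f -> is_poly n g -> is_poly n (fun x => f x + g x)
| poly_mul f g : is_poly n f -> is_poly n g -> is_poly n (fun x => f x * g x)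
| poly_ext f g : is_poly n f -> (forall x, f x = g x) -> is_poly n g.

Definition is_grad (n : nat) (f : vec -> R) (df : vec -> vec) : Prop :=
  forall x j, (j < n)%nat -> derivable_pt_lim (fun t => f (upd x j t)) (x j) (df x j).

(** Block structure: block i has size [sz i] and starts at [offn sz i]. *)
Fixpoint offn (sz : nat -> nat) (i : nat) : nat :=
  match i with O => O | S i' => (offn sz i' + sz i')%nat end.
Definition in_blk (sz : nat -> nat) (i j : nat) : bool :=
  Nat.leb (offn sz i) j && Nat.ltb j (offn sz (S i)).
Definition blk (sz : nat -> nat) (x : vec) (i : nat) : vec := fun j => x (offn sz i + j)%nat.
Definition set_blk (sz : nat -> nat) (x : vec) (i : nat) (u : vec) : vec :=
  fun j => if in_blk sz i j then u (j - offn sz i)%nat else x j.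
Definition concat (P : nat) (sz : nat -> nat) (f : nat -> vec) : vec :=
  fun j => sumR P (fun i => if in_blk sz i j then f i (j - offn sz i)%nat else 0).

Definition in_box (n : nat) (lo hi : vec) (x : vec) : Prop :=
  forall j, (j < n)%nat -> lo j <= x j <= hi j.

Definition is_proj (n : nat) (C : vec -> Prop) (x y : vec) : Prop :=
  C y /\ forall u, C u -> norm n (vsub x y) <= norm n (vsub x u).

Record problem := {
  nP : nat;
  nb : nat -> nat;              (* n_i : size of block z_i *)
  nm : nat;                     (* m : number of coupling constraints Q_c *)
  nq : nat -> nat;
  np : nat;                     (* p : dimension of the parameter s *)
  Jb : nat -> vec -> R;
  Qc : vec -> vec;
  gb : nat -> vec -> vec;
  Tb : nat -> nat -> nat -> R;  (* T_i (q_i x p matrix): Tb i r l *)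
  lo : vec; hi : vec;           (* Z = box [lo,hi] in R^{n_z}; Z_i = its block i *)
  Sset : vec -> Prop
}.

Definition nz (pb : problem) : nat := offn (nb pb) (nP pb).
Definition qtot (pb : problem) : nat := offn (nq pb) (nP pb).
Definition nmu (pb : problem) : nat := (nm pb + qtot pb)%nat.

Definition wf_problem (pb : problem) : Prop :=
  (forall i, (i < nP pb)%nat -> is_poly (nb pb i) (Jb pb i)) /\
  (forall l, (l < nm pb)%nat -> is_poly (nz pb) (fun z => Qc pb z l)) /\
  (forall i r, (i < nP pb)%nat -> (r < nq pb i)%nat -> is_poly (nb pb i) (fun u => gb pb i u r)) /\
  (forall j, (j < nz pb)%nat -> lo pb j <= hi pb j).

Definition inZ (pb : problem) (z : vec) : Prop := in_box (nz pb) (lo pb) (hi pb) z.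
Definition inZi (pb : problem) (i : nat) (u : vec) : Prop :=
  in_box (nb pb i) (blk (nb pb) (lo pb) i) (blk (nb pb) (hi pb) i) u.
Definition inW (pb : problem) (w : pvec) : Prop := inZ pb (fst w).

Definition Jf (pb : problem) (z : vec) : R := sumR (nP pb) (fun i => Jb pb i (blk (nb pb) z i)).
(** G(z,s) = (Q_c(z), g_1(z_1)+T_1 s, ..., g_P(z_P)+T_P s) *)
Definition Gf (pb : problem) (z s : vec) : vec :=
  fun j => if Nat.ltb j (nm pb) then Qc pb z j
           else concat (nP pb) (nq pb)
                  (fun i => vadd (gb pb i (blk (nb pb) z i)) (matvec (np pb) (Tb pb i) s))
                  (j - nm pb)%nat.

(** Gradient data: [dJ z] = grad J(z); [dG l z] = grad_z G_l(z,s)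
    (the gradient of each component of G in z, independent of s). *)
Definition grad_data (pb : problem) (dJ : vec -> vec) (dG : nat -> vec -> vec) : Prop :=
  is_grad (nz pb) (Jf pb) dJ /\
  forall s l, (l < nmu pb)%nat -> is_grad (nz pb) (fun z => Gf pb z s l) (dG l).

Definition gradLag0 (pb : problem) (dJ : vec -> vec) (dG : nat -> vec -> vec) (z mu : vec) : vec :=
  fun j => dJ z j + sumR (nmu pb) (fun l => mu l * dG l z j).

Definition Fmap (pb : problem) dJ dG (w : pvec) (s : vec) : pvec :=
  (gradLag0 pb dJ dG (fst w) (snd w), Gf pb (fst w) s).

Definition Hmap (pb : problem) dJ dG (rho : R) (mut : vec) (w : pvec) (d s : vec) : pvec :=
  (gradLag0 pb dJ dG (fst w) (snd w),
   fun j => Gf pb (fst w) s j + d j + (mut j - snd w j) / rho).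

Definition normal_cone (pb : problem) (w v : pvec) : Prop :=
  inW pb w /\ forall u, inW pb u -> pdot (nz pb) (nmu pb) v (psub u w) <= 0.

Definition gen_eq (pb : problem) (Phi w : pvec) : Prop :=
  exists v, normal_cone pb w v /\
    pveq (nz pb) (nmu pb) (vadd (fst Phi) (fst v), vadd (snd Phi) (snd v)) (vzero, vzero).

Definition KKT (pb : problem) dJ dG (w : pvec) (s : vec) : Prop :=
  gen_eq pb (Fmap pb dJ dG w s) w.

Definition Lag (pb : problem) (rho : R) (z mu s : vec) : R :=
  Jf pb z + sumR (nmu pb) (fun l => (mu l + rho / 2 * Gf pb z s l) * Gf pb z s l).
Definition gradLag (pb : problem) dJ dG (rho : R) (z mu s : vec) : vec :=
  fun j => dJ z j + sumR (nmu pb) (fun l => (mu l + rho * Gf pb z s l) * dG l z j).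

Definition bt_cond (pb : problem) dJ dG (rho : R) (alpha : nat -> R)
    (mu s : vec) (i : nat) (z : vec) (c : R) (u : vec) : Prop :=
  let zi := blk (nb pb) z i in
  let gi := blk (nb pb) (gradLag pb dJ dG rho z mu s) i in
  is_proj (nb pb i) (inZi pb i) (vsub zi (vscal (/ c) gi)) u /\
  Lag pb rho (set_blk (nb pb) z i u) mu s + alpha i / 2 * (norm (nb pb i) (vsub u zi))^2
  <= Lag pb rho z mu s + dot (nb pb i) gi (vsub u zi) + c / 2 * (norm (nb pb i) (vsub u zi))^2.

Definition block_step (pb : problem) dJ dG (rho : R) (alpha c0 : nat -> R) (beta : R)
    (mu s : vec) (i : nat) (z z' : vec) : Prop :=
  exists (t : nat) (u : vec),
    bt_cond pb dJ dG rho alpha mu s i z (c0 i * beta ^ t) u /\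
    (forall t' u', (t' < t)%nat ->
        is_proj (nb pb i) (inZi pb i)
          (vsub (blk (nb pb) z i) (vscal (/ (c0 i * beta ^ t')) (blk (nb pb) (gradLag pb dJ dG rho z mu s) i))) u' ->
        ~ bt_cond pb dJ dG rho alpha mu s i z (c0 i * beta ^ t') u') /\
    veq (nz pb) z' (set_blk (nb pb) z i u).

Definition sweep (pb : problem) dJ dG rho alpha c0 beta (mu s : vec) (z z' : vec) : Prop :=
  exists zs : nat -> vec, zs O = z /\
    (forall i, (i < nP pb)%nat -> block_step pb dJ dG rho alpha c0 beta mu s i (zs i) (zs (S i))) /\
    veq (nz pb) z' (zs (nP pb)).

Definition sweeps (pb : problem) dJ dG rho alpha c0 beta (M : nat) (mu s : vec) (z z' : vec) : Prop :=
  exists zs : nat -> vec, zs O = z /\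
    (forall n, (n < M)%nat -> sweep pb dJ dG rho alpha c0 beta mu s (zs n) (zs (S n))) /\
    veq (nz pb) z' (zs M).

Definition sweeps_limit (pb : problem) dJ dG rho alpha c0 beta (mu s : vec) (z zinf : vec) : Prop :=
  exists zs : nat -> vec, zs O = z /\
    (forall n, sweep pb dJ dG rho alpha c0 beta mu s (zs n) (zs (S n))) /\
    (forall eps, eps > 0 -> exists N, forall n, (n >= N)%nat -> norm (nz pb) (vsub (zs n) zinf) < eps).

Definition lamF_of (pb : problem) (Tn : nat -> R) : R := INR (nP pb) * maxR (nP pb) Tn.

Definition d_of (rho : R) (wbar wstar : pvec) : vec := vscal (/ rho) (vsub (snd wbar) (snd wstar)).

Definition winf_of (pb : problem) (rho : R) (zinf : vec) (wbar : pvec) (s' : vec) : pvec :=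
  (zinf, vadd (snd wbar) (vscal rho (Gf pb zinf s'))).

Definition tracking_iter (pb : problem) dJ dG rho alpha c0 beta (M : nat)
    (s : nat -> vec) (wbar : nat -> pvec) : Prop :=
  forall k,
    inZ pb (fst (wbar k)) /\
    sweeps pb dJ dG rho alpha c0 beta M (snd (wbar k)) (s (S k)) (fst (wbar k)) (fst (wbar (S k))) /\
    veq (nmu pb) (snd (wbar (S k)))
        (vadd (snd (wbar k)) (vscal rho (Gf pb (fst (wbar (S k))) (s (S k))))).

(** Hypothesis (A), with w*(s) = wA k s *)
Definition hypA (pb : problem) dJ dG (s : nat -> vec) (wstar : nat -> pvec)
    (wA : nat -> vec -> pvec) (rA dA lA : R) : Prop :=
  forall k,
    (forall s', Sset pb s' -> norm (np pb) (vsub s' (s k)) < rA ->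
       pdist (nz pb) (nmu pb) (wA k s') (wstar k) < dA /\
       KKT pb dJ dG (wA k s') s' /\
       (forall w, pdist (nz pb) (nmu pb) w (wstar k) < dA -> KKT pb dJ dG w s' ->
          pveq (nz pb) (nmu pb) w (wA k s'))) /\
    (forall s1 s2, Sset pb s1 -> norm (np pb) (vsub s1 (s k)) < rA ->
                   Sset pb s2 -> norm (np pb) (vsub s2 (s k)) < rA ->
       pdist (nz pb) (nmu pb) (wA k s1) (wA k s2)
       <= lA * pdist (nz pb) (nmu pb) (Fmap pb dJ dG (wA k s2) s1) (Fmap pb dJ dG (wA k s2) s2)) /\
    (norm (np pb) (vsub (s (S k)) (s k)) < rA ->
       pveq (nz pb) (nmu pb) (wstar (S k)) (wA k (s (S k)))).

(** Hypothesis (B), with w*_k(d,s) = wB k d s *)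
Definition hypB (pb : problem) dJ dG (rho : R) (s : nat -> vec) (wstar : nat -> pvec)
    (wB : nat -> vec -> vec -> pvec) (rB qB lB dB : R) : Prop :=
  forall k,
    (forall d s', norm (nmu pb) d < qB -> Sset pb s' -> norm (np pb) (vsub s' (s k)) < rB ->
       pdist (nz pb) (nmu pb) (wB k d s') (wstar k) < dB /\
       gen_eq pb (Hmap pb dJ dG rho (snd (wstar k)) (wB k d s') d s') (wB k d s') /\
       (forall w, pdist (nz pb) (nmu pb) w (wstar k) < dB ->
          gen_eq pb (Hmap pb dJ dG rho (snd (wstar k)) w d s') w ->
          pveq (nz pb) (nmu pb) w (wB k d s'))) /\
    (forall d1 s1 d2 s2,
       norm (nmu pb) d1 < qB -> Sset pb s1 -> norm (np pb) (vsub s1 (s k)) < rB ->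
       norm (nmu pb) d2 < qB -> Sset pb s2 -> norm (np pb) (vsub s2 (s k)) < rB ->
       pdist (nz pb) (nmu pb) (wB k d1 s1) (wB k d2 s2)
       <= lB * pdist (nz pb) (nmu pb)
                 (Hmap pb dJ dG rho (snd (wstar k)) (wB k d2 s2) d1 s1)
                 (Hmap pb dJ dG rho (snd (wstar k)) (wB k d2 s2) d2 s2)).

Definition hypC (pb : problem) dJ dG rho alpha c0 beta (M : nat) (s : nat -> vec)
    (wstar wbar : nat -> pvec) (wB : nat -> vec -> vec -> pvec) (zinf : nat -> vec)
    (rB qB Cc delta psi : R) : Prop :=
  forall k,
    sweeps_limit pb dJ dG rho alpha c0 beta (snd (wbar k)) (s (S k)) (fst (wbar k)) (zinf k) /\
    (norm (nmu pb) (d_of rho (wbar k) (wstar k)) < qB ->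
     norm (np pb) (vsub (s (S k)) (s k)) < rB ->
       pveq (nz pb) (nmu pb) (winf_of pb rho (zinf k) (wbar k) (s (S k)))
            (wB k (d_of rho (wbar k) (wstar k)) (s (S k)))) /\
    (norm (nz pb) (vsub (fst (wbar k)) (zinf k)) < delta ->
       norm (nz pb) (vsub (fst (wbar (S k))) (zinf k))
       <= Cc * Rpower (INR M) (- psi) * norm (nz pb) (vsub (fst (wbar k)) (zinf k))).

From Stdlib Require Import Reals Lra Lia FunctionalExtensionality.
Open Scope R_scope.

(* The points w*_k, w*_{k+1} and w^oo_k all solve the generalized equation
   0 in H^{mu*_k}_rho(w, d, s) + N(w), for (d, s) = (0, s_k),
   ((mu*_{k+1} - mu*_k)/rho, s_{k+1}) and (d_k, s_{k+1}) respectively, so the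
   Lipschitz solution map of (B), together with the drift bound
   |w*_{k+1} - w*_k| <= lambda_A lambda_F |s_{k+1} - s_k| from (A), controls
   their mutual distances.  Condition (iii) then puts zbar_k inside the
   contraction radius of the sweeps in (C), and the multiplier update turns the
   primal error |zbar_{k+1} - z^oo_k| into a primal-dual one at the cost of the
   factor 1 + rho lambda_G.  The triangle inequality through w^oo_k concludes. *)

Lemma sumR_ext n f g : (forall i, (i < n)%nat -> f i = g i) -> sumR n f = sumR n g.
Proof.
  induction n as [|n IH]; intros Hfg; simpl; auto.
  rewrite IH by (intros; apply Hfg; lia). rewrite Hfg by lia. reflexivity.
Qed.

Lemma sumR_add n f g : sumR n (fun i => f i + g i) = sumR n f + sumR n g.
Proof. induction n as [|n IH]; simpl; [ring | rewrite IH; ring]. Qed.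

Lemma sumR_sub n f g : sumR n (fun i => f i - g i) = sumR n f - sumR n g.
Proof. induction n as [|n IH]; simpl; [ring | rewrite IH; ring]. Qed.

Lemma sumR_scal n c f : sumR n (fun i => c * f i) = c * sumR n f.
Proof. induction n as [|n IH]; simpl; [ring | rewrite IH; ring]. Qed.

Lemma sumR_eq0 n f : (forall i, (i < n)%nat -> f i = 0) -> sumR n f = 0.
Proof. intros Hf. rewrite (sumR_ext n f (fun _ => 0 * 0)), sumR_scal by (intros; rewrite Hf by auto; ring). ring. Qed.

Lemma sumR_ge0 n f : (forall i, (i < n)%nat -> 0 <= f i) -> 0 <= sumR n f.
Proof.
  induction n as [|n IH]; intros Hf; simpl; [lra |].
  assert (0 <= sumR n f) by (apply IH; intros; apply Hf; lia).
  assert (0 <= f n) by (apply Hf; lia). lra.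
Qed.

Lemma sumR_ge_term n f i :
  (forall j, (j < n)%nat -> 0 <= f j) -> (i < n)%nat -> f i <= sumR n f.
Proof.
  induction n as [|n IH]; intros Hf Hi; simpl; [lia |].
  assert (0 <= f n) by (apply Hf; lia).
  destruct (Nat.eq_dec i n) as [-> | Hin].
  - assert (0 <= sumR n f) by (apply sumR_ge0; intros; apply Hf; lia). lra.
  - assert (f i <= sumR n f) by (apply IH; [intros; apply Hf | ]; lia). lra.
Qed.

Lemma sumR_add_range n1 n2 f :
  sumR (n1 + n2) f = sumR n1 f + sumR n2 (fun i => f (n1 + i)%nat).
Proof.
  induction n2 as [|n2 IH]; simpl; [rewrite Nat.add_0_r; ring |].
  rewrite Nat.add_succ_r; simpl; rewrite IH; ring.
Qed.

Lemma sumR_le_const n f c : (forall i, (i < n)%nat -> f i <= c) -> sumR n f <= INR n * c.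
Proof.
  induction n as [|n IH]; intros Hf; simpl sumR; [simpl; lra |].
  rewrite S_INR.
  assert (sumR n f <= INR n * c) by (apply IH; intros; apply Hf; lia).
  assert (f n <= c) by (apply Hf; lia). lra.
Qed.

Lemma maxR_ge0 n f : 0 <= maxR n f.
Proof. induction n as [|n IH]; simpl; [lra | eapply Rle_trans; [exact IH | apply Rmax_l]]. Qed.

Lemma maxR_ge n f i : (i < n)%nat -> f i <= maxR n f.
Proof.
  induction n as [|n IH]; intros Hi; simpl; [lia |].
  destruct (Nat.eq_dec i n) as [-> | Hin]; [apply Rmax_r |].
  eapply Rle_trans; [apply IH; lia | apply Rmax_l].
Qed.

Lemma dot_self_ge0 n x : 0 <= dot n x x.
Proof. apply sumR_ge0; intros; nra. Qed.

Lemma norm_ge0 n x : 0 <= norm n x.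
Proof. apply sqrt_pos. Qed.

Lemma norm_sqr n x : norm n x ^ 2 = dot n x x.
Proof. apply pow2_sqrt, dot_self_ge0. Qed.

Lemma norm_ext n x y : (forall i, (i < n)%nat -> x i = y i) -> norm n x = norm n y.
Proof. intros Hxy; unfold norm, dot; f_equal; apply sumR_ext; intros i Hi; rewrite Hxy; auto. Qed.

Lemma norm_scal n a x : norm n (vscal a x) = Rabs a * norm n x.
Proof.
  unfold norm, dot, vscal.
  rewrite (sumR_ext _ _ (fun i => (a * a) * (x i * x i))) by (intros; ring).
  rewrite sumR_scal, sqrt_mult_alt, <- sqrt_Rsqr_abs by nra. reflexivity.
Qed.

Lemma norm_vzero n : norm n vzero = 0.
Proof. unfold norm, dot, vzero. rewrite sumR_eq0 by (intros; ring). apply sqrt_0. Qed.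

Lemma norm_vsub_diag n x : norm n (vsub x x) = 0.
Proof. rewrite <- (norm_vzero n). apply norm_ext; intros; unfold vsub, vzero; ring. Qed.

Lemma norm_vsubC n x y : norm n (vsub x y) = norm n (vsub y x).
Proof. unfold norm, dot; f_equal; apply sumR_ext; intros; unfold vsub; ring. Qed.

Lemma norm_eq0_coord n x i : norm n x = 0 -> (i < n)%nat -> x i = 0.
Proof.
  intros Hx Hi.
  assert (Hd : dot n x x = 0) by (apply sqrt_eq_0; [apply dot_self_ge0 | exact Hx]).
  assert (x i * x i <= dot n x x) by (apply (sumR_ge_term n (fun i => x i * x i)); [intros; nra | auto]).
  nra.
Qed.

Lemma discriminant_le a b c :
  (forall t, 0 <= a - 2 * t * b + t * t * c) -> 0 <= c -> b * b <= a * c.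
Proof.
  intros Hq Hc.
  destruct (Rle_lt_or_eq_dec 0 c Hc) as [Hc0 | <-].
  - specialize (Hq (b / c)).
    replace (a - 2 * (b / c) * b + b / c * (b / c) * c) with ((a * c - b * b) / c) in Hq
      by (field; lra).
    assert (0 <= c * ((a * c - b * b) / c)) by (apply Rmult_le_pos; lra).
    replace (c * ((a * c - b * b) / c)) with (a * c - b * b) in H by (field; lra). lra.
  - destruct (Req_dec b 0) as [-> | Hb]; [lra |].
    specialize (Hq ((a + 1) / (2 * b))).
    replace (a - 2 * ((a + 1) / (2 * b)) * b + (a + 1) / (2 * b) * ((a + 1) / (2 * b)) * 0)
      with (-1) in Hq by (field; auto). lra.
Qed.

Lemma dot_le_norm_mul n x y : dot n x y <= norm n x * norm n y.
Proof.
  assert (Hdisc : dot n x y * dot n x y <= dot n x x * dot n y y).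
  { apply discriminant_le; [intros t | apply dot_self_ge0].
    replace (dot n x x - 2 * t * dot n x y + t * t * dot n y y)
      with (dot n (vsub x (vscal t y)) (vsub x (vscal t y))).
    - apply dot_self_ge0.
    - unfold dot, vsub, vscal.
      rewrite (sumR_ext _ _ (fun i => (x i * x i + (-2 * t) * (x i * y i)) + (t * t) * (y i * y i)))
        by (intros; ring).
      rewrite !sumR_add, !sumR_scal; ring. }
  unfold norm; rewrite <- sqrt_mult_alt by apply dot_self_ge0.
  apply Rle_trans with (sqrt (dot n x y * dot n x y)).
  - change (dot n x y * dot n x y) with (Rsqr (dot n x y)).
    rewrite sqrt_Rsqr_abs; apply Rle_abs.
  - apply sqrt_le_1_alt; exact Hdisc.
Qed.
Lemma norm_vadd_le n x y : norm n (vadd x y) <= norm n x + norm n y.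
Proof.
  assert (Hxy := dot_le_norm_mul n x y).
  assert (Hx := norm_sqr n x). assert (Hy := norm_sqr n y).
  assert (0 <= norm n x) by apply norm_ge0. assert (0 <= norm n y) by apply norm_ge0.
  unfold norm at 1; rewrite <- (sqrt_pow2 (norm n x + norm n y)) by lra.
  apply sqrt_le_1_alt.
  replace (dot n (vadd x y) (vadd x y)) with (dot n x x + 2 * dot n x y + dot n y y).
  - nra.
  - unfold dot, vadd.
    rewrite (sumR_ext _ (fun i => (x i + y i) * (x i + y i))
               (fun i => (x i * x i + 2 * (x i * y i)) + y i * y i)) by (intros; ring).
    rewrite !sumR_add, sumR_scal; ring.
Qed.

Lemma norm_vsub_triangle n x y z : norm n (vsub x z) <= norm n (vsub x y) + norm n (vsub y z).
Proof.
  rewrite (norm_ext n (vsub x z) (vadd (vsub x y) (vsub y z)))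
    by (intros; unfold vadd, vsub; ring).
  apply norm_vadd_le.
Qed.

Lemma sqrt_sum_sq_le_add a c : 0 <= a -> 0 <= c -> sqrt (a ^ 2 + c ^ 2) <= a + c.
Proof. intros. rewrite <- (sqrt_pow2 (a + c)) by lra. apply sqrt_le_1_alt. nra. Qed.

Lemma le_sqrt_sum_sq a c : 0 <= a -> a <= sqrt (a ^ 2 + c ^ 2).
Proof. intros. rewrite <- (sqrt_pow2 a) at 1 by lra. apply sqrt_le_1_alt. nra. Qed.

Lemma sqrt_sum_sq_add_le a b c d :
  sqrt ((a + b) ^ 2 + (c + d) ^ 2) <= sqrt (a ^ 2 + c ^ 2) + sqrt (b ^ 2 + d ^ 2).
Proof.
  assert (Hac := pow2_sqrt (a ^ 2 + c ^ 2) ltac:(nra)).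
  assert (Hbd := pow2_sqrt (b ^ 2 + d ^ 2) ltac:(nra)).
  assert (0 <= sqrt (a ^ 2 + c ^ 2)) by apply sqrt_pos.
  assert (0 <= sqrt (b ^ 2 + d ^ 2)) by apply sqrt_pos.
  assert (Hcs := sqrt_cauchy a c b d). unfold Rsqr in Hcs.
  replace (a * a + c * c) with (a ^ 2 + c ^ 2) in Hcs by ring.
  replace (b * b + d * d) with (b ^ 2 + d ^ 2) in Hcs by ring.
  rewrite <- (sqrt_pow2 (sqrt (a ^ 2 + c ^ 2) + sqrt (b ^ 2 + d ^ 2))) by lra.
  apply sqrt_le_1_alt. nra.
Qed.

Lemma pdist_sqrt n1 n2 x y :
  pdist n1 n2 x y
  = sqrt (norm n1 (vsub (fst x) (fst y)) ^ 2 + norm n2 (vsub (snd x) (snd y)) ^ 2).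
Proof. unfold pdist, pnorm, pdot, psub; cbn [fst snd]; rewrite !norm_sqr; reflexivity. Qed.

Lemma pdist_diag n1 n2 x : pdist n1 n2 x x = 0.
Proof. rewrite pdist_sqrt, !norm_vsub_diag. replace (0 ^ 2 + 0 ^ 2) with 0 by ring. apply sqrt_0. Qed.

Lemma pdistC n1 n2 x y : pdist n1 n2 x y = pdist n1 n2 y x.
Proof. rewrite !pdist_sqrt, (norm_vsubC n1), (norm_vsubC n2). reflexivity. Qed.

Lemma pdist_triangle n1 n2 x y z : pdist n1 n2 x z <= pdist n1 n2 x y + pdist n1 n2 y z.
Proof.
  rewrite !pdist_sqrt. eapply Rle_trans; [| apply sqrt_sum_sq_add_le].
  apply sqrt_le_1_alt.
  assert (H1 := norm_vsub_triangle n1 (fst x) (fst y) (fst z)).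
  assert (H2 := norm_vsub_triangle n2 (snd x) (snd y) (snd z)).
  assert (0 <= norm n1 (vsub (fst x) (fst z))) by apply norm_ge0.
  assert (0 <= norm n2 (vsub (snd x) (snd z))) by apply norm_ge0.
  nra.
Qed.

Lemma pdist_le_norm_add n1 n2 x y :
  pdist n1 n2 x y <= norm n1 (vsub (fst x) (fst y)) + norm n2 (vsub (snd x) (snd y)).
Proof. rewrite pdist_sqrt; apply sqrt_sum_sq_le_add; apply norm_ge0. Qed.

Lemma norm_fst_le_pdist n1 n2 x y : norm n1 (vsub (fst x) (fst y)) <= pdist n1 n2 x y.
Proof. rewrite pdist_sqrt; apply le_sqrt_sum_sq, norm_ge0. Qed.

Lemma norm_snd_le_pdist n1 n2 x y : norm n2 (vsub (snd x) (snd y)) <= pdist n1 n2 x y.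
Proof. rewrite pdist_sqrt, Rplus_comm; apply le_sqrt_sum_sq, norm_ge0. Qed.

Lemma pveq_refl n1 n2 x : pveq n1 n2 x x.
Proof. split; intros i _; reflexivity. Qed.

Lemma pdist_pveq n1 n2 x x' y y' :
  pveq n1 n2 x x' -> pveq n1 n2 y y' -> pdist n1 n2 x y = pdist n1 n2 x' y'.
Proof.
  intros [Hx1 Hx2] [Hy1 Hy2]. rewrite !pdist_sqrt.
  rewrite (norm_ext n1 (vsub (fst x) (fst y)) (vsub (fst x') (fst y')))
    by (intros; unfold vsub; rewrite Hx1, Hy1; auto).
  rewrite (norm_ext n2 (vsub (snd x) (snd y)) (vsub (snd x') (snd y')))
    by (intros; unfold vsub; rewrite Hx2, Hy2; auto).
  reflexivity.
Qed.

Lemma matvec_scal c T a x r : matvec c T (vscal a x) r = a * matvec c T x r.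
Proof. unfold matvec. rewrite <- sumR_scal. apply sumR_ext; intros; unfold vscal; ring. Qed.

Lemma opnorm_ge0 r c T a : is_opnorm r c T a -> 0 <= a.
Proof.
  intros [Hub _]. apply Rle_trans with (norm r (matvec c T vzero)); [apply norm_ge0 |].
  apply Hub. exists vzero. split; [rewrite norm_vzero; lra | reflexivity].
Qed.

Lemma norm_matvec_le r c T a x : is_opnorm r c T a -> norm r (matvec c T x) <= a * norm c x.
Proof.
  intros Hop. assert (Ha := opnorm_ge0 _ _ _ _ Hop). destruct Hop as [Hub _].
  destruct (Req_dec (norm c x) 0) as [Hx0 | Hx0].
  - rewrite (norm_ext r _ vzero), norm_vzero, Hx0; [lra |].
    intros i _. unfold matvec, vzero. apply sumR_eq0. intros l Hl.
    rewrite (norm_eq0_coord c x l Hx0 Hl). ring.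
  - assert (Hx : 0 < / norm c x) by (apply Rinv_0_lt_compat; pose proof (norm_ge0 c x); lra).
    assert (Hunit : norm r (matvec c T (vscal (/ norm c x) x)) <= a).
    { apply Hub. exists (vscal (/ norm c x) x). split; [| reflexivity].
      rewrite norm_scal, Rabs_right by lra. right; field; auto. }
    rewrite (norm_ext r _ (vscal (/ norm c x) (matvec c T x))), norm_scal, Rabs_right in Hunit
      by (intros; unfold vscal; apply matvec_scal || lra).
    apply (Rmult_le_compat_l (norm c x)) in Hunit; [| apply norm_ge0].
    replace (norm c x * (/ norm c x * norm r (matvec c T x))) with (norm r (matvec c T x))
      in Hunit by (field; auto).
    lra.
Qed.

Lemma offn_mono sz a b : (a <= b)%nat -> (offn sz a <= offn sz b)%nat.
Proof.
  induction b as [|b IH]; intros Hab; [replace a with 0%nat by lia; lia |].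
  destruct (Nat.eq_dec a (S b)) as [-> | Ha]; [lia |].
  simpl. assert (offn sz a <= offn sz b)%nat by (apply IH; lia). lia.
Qed.

(* The blocks of a concatenation occupy disjoint coordinate ranges. *)
Lemma concat_dot_self P sz h :
  dot (offn sz P) (concat P sz h) (concat P sz h) = sumR P (fun b => dot (sz b) (h b) (h b)).
Proof.
  induction P as [|P IH]; [reflexivity |].
  unfold dot in *. change (offn sz (S P)) with (offn sz P + sz P)%nat.
  rewrite sumR_add_range. simpl sumR at 3. rewrite <- IH. f_equal.
  - apply sumR_ext. intros j Hj. unfold concat; simpl sumR. unfold in_blk.
    replace (Nat.leb (offn sz P) j) with false by (symmetry; apply Nat.leb_gt; lia).
    simpl. ring.
  - apply sumR_ext. intros i Hi. unfold concat; simpl sumR.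
    rewrite (sumR_eq0 P).
    + unfold in_blk.
      replace (Nat.leb (offn sz P) (offn sz P + i)) with true by (symmetry; apply Nat.leb_le; lia).
      replace (Nat.ltb (offn sz P + i) (offn sz (S P))) with true
        by (symmetry; apply Nat.ltb_lt; simpl; lia).
      replace (offn sz P + i - offn sz P)%nat with i by lia. simpl. ring.
    + intros b Hb. assert (offn sz (S b) <= offn sz P)%nat by (apply offn_mono; lia).
      unfold in_blk.
      replace (Nat.ltb (offn sz P + i) (offn sz (S b))) with false by (symmetry; apply Nat.ltb_ge; lia).
      rewrite Bool.andb_false_r. reflexivity.
Qed.

(* Only the blocks [g_i(z_i) + T_i s] depend on [s], and they do so through [T_i]. *)
Lemma dot_Gf_sub_param pb z s1 s0 :
  let h b := matvec (np pb) (Tb pb b) (vsub s1 s0) in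
  dot (nmu pb) (vsub (Gf pb z s1) (Gf pb z s0)) (vsub (Gf pb z s1) (Gf pb z s0))
  = sumR (nP pb) (fun b => dot (nq pb b) (h b) (h b)).
Proof.
  intros h. unfold nmu, qtot. rewrite <- concat_dot_self. unfold dot at 1.
  rewrite sumR_add_range, (sumR_eq0 (nm pb)), Rplus_0_l.
  2:{ intros j Hj. unfold Gf, vsub. rewrite (proj2 (Nat.ltb_lt _ _) Hj). ring. }
  apply sumR_ext. intros i Hi.
  assert (Hblk : vsub (Gf pb z s1) (Gf pb z s0) (nm pb + i)%nat = concat (nP pb) (nq pb) h i).
  { unfold Gf, vsub.
    replace (Nat.ltb (nm pb + i) (nm pb)) with false by (symmetry; apply Nat.ltb_ge; lia).
    replace (nm pb + i - nm pb)%nat with i by lia.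
    unfold concat. rewrite <- sumR_sub. apply sumR_ext. intros b Hb.
    destruct (in_blk (nq pb) b i); [| ring].
    unfold vadd, h, matvec, vsub. set (Tr := Tb pb b (i - offn (nq pb) b)%nat).
    rewrite (sumR_ext (np pb) (fun l => Tr l * (s1 l - s0 l)) (fun l => Tr l * s1 l - Tr l * s0 l))
      by (intros; ring).
    rewrite sumR_sub. ring. }
  rewrite Hblk. reflexivity.
Qed.

Lemma Gf_lipschitz_param pb Tn z s1 s0 :
  (forall i, (i < nP pb)%nat -> is_opnorm (nq pb i) (np pb) (Tb pb i) (Tn i)) ->
  norm (nmu pb) (vsub (Gf pb z s1) (Gf pb z s0)) <= lamF_of pb Tn * norm (np pb) (vsub s1 s0).
Proof.
  intros HT. set (mx := maxR (nP pb) Tn). set (sg := norm (np pb) (vsub s1 s0)).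
  assert (Hmx : 0 <= mx) by apply maxR_ge0. assert (Hsg : 0 <= sg) by apply norm_ge0.
  assert (Hblock : forall b, (b < nP pb)%nat ->
            dot (nq pb b) (matvec (np pb) (Tb pb b) (vsub s1 s0))
                          (matvec (np pb) (Tb pb b) (vsub s1 s0)) <= (mx * sg) ^ 2).
  { intros b Hb. rewrite <- norm_sqr.
    assert (H1 := norm_matvec_le _ _ _ _ (vsub s1 s0) (HT b Hb)).
    assert (H2 := opnorm_ge0 _ _ _ _ (HT b Hb)).
    assert (H3 : Tn b <= mx) by (apply maxR_ge; auto).
    assert (H4 := norm_ge0 (nq pb b) (matvec (np pb) (Tb pb b) (vsub s1 s0))).
    fold sg in H1. apply pow_incr. nra. }
  assert (HP : INR (nP pb) * (mx * sg) ^ 2 <= (INR (nP pb) * mx * sg) ^ 2).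
  { destruct (nP pb) as [|P]; [simpl; lra |].
    assert (1 <= INR (S P)) by (apply (le_INR 1); lia).
    assert (0 <= (mx * sg) ^ 2) by apply pow2_ge_0.
    replace ((INR (S P) * mx * sg) ^ 2) with (INR (S P) * INR (S P) * (mx * sg) ^ 2) by ring.
    nra. }
  unfold norm at 1, lamF_of. rewrite dot_Gf_sub_param. fold mx sg.
  rewrite <- (sqrt_pow2 (INR (nP pb) * mx * sg))
    by (apply Rmult_le_pos; [apply Rmult_le_pos; [apply pos_INR |] |]; auto).
  apply sqrt_le_1_alt. eapply Rle_trans; [apply sumR_le_const; exact Hblock | exact HP].
Qed.

(* Thus a KKT point of [(P_s)] solves the [H]-equation with [d = (mu - mu_ref)/rho]. *)
Lemma Hmap_d_of pb dJ dG rho w w' s :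
  rho <> 0 -> Hmap pb dJ dG rho (snd w') w (d_of rho w w') s = Fmap pb dJ dG w s.
Proof.
  intros Hrho. unfold Hmap, Fmap, d_of, vscal, vsub. f_equal.
  extensionality j. field. exact Hrho.
Qed.

Lemma d_of_diag rho w : d_of rho w w = vzero.
Proof. extensionality j. unfold d_of, vscal, vsub, vzero. ring. Qed.

Lemma vsub_d_of rho w1 w2 w : vsub (d_of rho w1 w) (d_of rho w2 w) = d_of rho w1 w2.
Proof. extensionality j. unfold d_of, vscal, vsub. ring. Qed.

Lemma norm_d_of n1 n2 rho w w' :
  rho > 0 -> norm n2 (d_of rho w w') <= pdist n1 n2 w w' / rho.
Proof.
  intros Hrho. unfold d_of. rewrite norm_scal, Rabs_right by (left; apply Rinv_0_lt_compat; lra).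
  unfold Rdiv. rewrite (Rmult_comm (pdist _ _ _ _)).
  apply Rmult_le_compat_l; [left; apply Rinv_0_lt_compat; lra | apply norm_snd_le_pdist].
Qed.

Lemma norm_d_of_lt n1 n2 rho q w w' :
  rho > 0 -> pdist n1 n2 w w' < q * rho -> norm n2 (d_of rho w w') < q.
Proof.
  intros Hrho Hw. eapply Rle_lt_trans; [apply (norm_d_of n1); lra |].
  apply Rmult_lt_reg_r with rho; [lra |]. unfold Rdiv. rewrite Rmult_assoc, Rinv_l by lra. lra.
Qed.

Lemma gen_eq_inZ pb Phi w : gen_eq pb Phi w -> inZ pb (fst w).
Proof. intros [v [[Hw _] _]]. exact Hw. Qed.

Lemma inZ_veq pb z z' : veq (nz pb) z z' -> inZ pb z' -> inZ pb z.
Proof. intros Hzz' Hz' j Hj. rewrite Hzz' by auto. apply Hz'; auto. Qed.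

Lemma pdist_multiplier_update pb rho lG z w w' s' :
  rho > 0 ->
  norm (nmu pb) (vsub (Gf pb (fst w') s') (Gf pb z s')) <= lG * norm (nz pb) (vsub (fst w') z) ->
  veq (nmu pb) (snd w') (vadd (snd w) (vscal rho (Gf pb (fst w') s'))) ->
  pdist (nz pb) (nmu pb) w' (winf_of pb rho z w s') <= (1 + rho * lG) * norm (nz pb) (vsub (fst w') z).
Proof.
  intros Hrho HGz Hmu.
  eapply Rle_trans; [apply pdist_le_norm_add |]. unfold winf_of; cbn [fst snd].
  rewrite (norm_ext _ (vsub (snd w') _) (vscal rho (vsub (Gf pb (fst w') s') (Gf pb z s'))))
    by (intros i Hi; unfold vsub at 1; rewrite Hmu by auto; unfold vsub, vadd, vscal; ring).
  rewrite norm_scal, Rabs_right by lra.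
  apply (Rmult_le_compat_l rho) in HGz; lra.
Qed.

Section TrackingStep.

Context {pb : problem} {dJ : vec -> vec} {dG : nat -> vec -> vec} {rho : R}
  {s : nat -> vec} {wstar : nat -> pvec} {k : nat}.
Hypothesis Hrho : rho > 0.
Hypothesis HS : forall j, Sset pb (s j).
Hypothesis Hwstar : forall j, KKT pb dJ dG (wstar j) (s j).

Local Notation step := (norm (np pb) (vsub (s (S k)) (s k))).

Context {rA dA lA : R} {wA : nat -> vec -> pvec} {Tn : nat -> R}.
Hypothesis HdA : dA > 0.
Hypothesis HlA : lA > 0.
Hypothesis HA : hypA pb dJ dG s wstar wA rA dA lA.
Hypothesis HTn : forall i, (i < nP pb)%nat -> is_opnorm (nq pb i) (np pb) (Tb pb i) (Tn i).
Hypothesis HsA : step < rA.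

Lemma wstar_drift : pdist (nz pb) (nmu pb) (wstar (S k)) (wstar k) <= lA * lamF_of pb Tn * step.
Proof.
  destruct (HA k) as [HA1 [HA2 HA3]].
  assert (Hs0 : norm (np pb) (vsub (s k) (s k)) < rA) by
    (rewrite norm_vsub_diag; pose proof (norm_ge0 (np pb) (vsub (s (S k)) (s k))); lra).
  assert (Hwk : pveq (nz pb) (nmu pb) (wstar k) (wA k (s k))).
  { apply (HA1 (s k) (HS k) Hs0); [rewrite pdist_diag; lra | apply Hwstar]. }
  rewrite (pdist_pveq _ _ _ _ _ _ (HA3 HsA) Hwk).
  eapply Rle_trans; [apply HA2; auto |]. rewrite Rmult_assoc.
  apply Rmult_le_compat_l; [lra |].
  eapply Rle_trans; [apply pdist_le_norm_add |]. unfold Fmap; cbn [fst snd].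
  rewrite norm_vsub_diag, Rplus_0_l. apply Gf_lipschitz_param, HTn.
Qed.

Context {lH lB rB qB dB : R} {wB : nat -> vec -> vec -> pvec}.
Hypothesis HlH : lH > 0.
Hypothesis HlB : lB > 0.
Hypothesis HqB : qB > 0.
Hypothesis HdB : dB >= dA.
Hypothesis HH : forall mut w d1 s1 d2 s2,
  pdist (nz pb) (nmu pb) (Hmap pb dJ dG rho mut w d1 s1) (Hmap pb dJ dG rho mut w d2 s2)
  <= lH * pdist (nmu pb) (np pb) (d1, s1) (d2, s2).
Hypothesis HB : hypB pb dJ dG rho s wstar wB rB qB lB dB.
Hypothesis HsB : step < rB.
Hypothesis HsF : lA * lamF_of pb Tn * step < qB * rho.

Lemma wB_lipschitz d1 s1 d2 s2 :
  norm (nmu pb) d1 < qB -> Sset pb s1 -> norm (np pb) (vsub s1 (s k)) < rB ->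
  norm (nmu pb) d2 < qB -> Sset pb s2 -> norm (np pb) (vsub s2 (s k)) < rB ->
  pdist (nz pb) (nmu pb) (wB k d1 s1) (wB k d2 s2)
  <= lB * lH * (norm (nmu pb) (vsub d1 d2) + norm (np pb) (vsub s1 s2)).
Proof.
  intros. destruct (HB k) as [_ HB2].
  eapply Rle_trans; [apply HB2; auto |]. rewrite Rmult_assoc.
  apply Rmult_le_compat_l; [lra |]. eapply Rle_trans; [apply HH |].
  apply Rmult_le_compat_l; [lra | apply (pdist_le_norm_add (nmu pb) (np pb) (d1, s1) (d2, s2))].
Qed.

Lemma wstar_eq_wB_vzero : pveq (nz pb) (nmu pb) (wstar k) (wB k vzero (s k)).
Proof.
  destruct (HB k) as [HB1 _].
  pose proof (norm_ge0 (np pb) (vsub (s (S k)) (s k))).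
  apply (HB1 vzero (s k)); [rewrite norm_vzero; lra | apply HS | rewrite norm_vsub_diag; lra
                          | rewrite pdist_diag; lra |].
  rewrite <- (d_of_diag rho (wstar k)), Hmap_d_of by lra. apply Hwstar.
Qed.

Lemma norm_d_of_wstar_lt : norm (nmu pb) (d_of rho (wstar (S k)) (wstar k)) < qB.
Proof. apply (norm_d_of_lt (nz pb)); [lra |]. pose proof wstar_drift. lra. Qed.

Lemma wstar_next_eq_wB :
  pveq (nz pb) (nmu pb) (wstar (S k)) (wB k (d_of rho (wstar (S k)) (wstar k)) (s (S k))).
Proof.
  destruct (HB k) as [HB1 _]. destruct (HA k) as [HA1 [_ HA3]].
  apply (HB1 _ _ norm_d_of_wstar_lt (HS (S k)) HsB).
  - rewrite (pdist_pveq _ _ _ _ (wstar k) (wstar k) (HA3 HsA) (pveq_refl _ _ _)).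
    destruct (HA1 (s (S k)) (HS (S k)) HsA). lra.
  - rewrite Hmap_d_of by lra. apply Hwstar.
Qed.

Context {alpha c0 : nat -> R} {beta : R} {M : nat} {wbar : nat -> pvec} {zinf : nat -> vec}
  {Cc delta psi lG : R}.
Hypothesis HCc : Cc > 0.
Hypothesis HlG : lG > 0.
Hypothesis HC : hypC pb dJ dG rho alpha c0 beta M s wstar wbar wB zinf rB qB Cc delta psi.
Hypothesis Hbar : pdist (nz pb) (nmu pb) (wbar k) (wstar k) < qB * rho.

Local Notation err := (pdist (nz pb) (nmu pb) (wbar k) (wstar k)).
Local Notation winf := (winf_of pb rho (zinf k) (wbar k) (s (S k))).

Lemma norm_d_of_wbar_lt : norm (nmu pb) (d_of rho (wbar k) (wstar k)) < qB.
Proof. apply (norm_d_of_lt (nz pb)); lra. Qed.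

Lemma winf_eq_wB : pveq (nz pb) (nmu pb) winf (wB k (d_of rho (wbar k) (wstar k)) (s (S k))).
Proof. apply (proj1 (proj2 (HC k)) norm_d_of_wbar_lt HsB). Qed.

Lemma zinf_in_Z : inZ pb (zinf k).
Proof.
  destruct (HB k) as [HB1 _].
  destruct (HB1 _ _ norm_d_of_wbar_lt (HS (S k)) HsB) as [_ [Hgen _]].
  apply (inZ_veq pb _ _ (proj1 winf_eq_wB)), (gen_eq_inZ _ _ _ Hgen).
Qed.

Lemma winf_dist_wstar : pdist (nz pb) (nmu pb) winf (wstar k) <= lB * lH * (err / rho + step).
Proof.
  rewrite (pdist_pveq _ _ _ _ _ _ winf_eq_wB wstar_eq_wB_vzero).
  pose proof (norm_ge0 (np pb) (vsub (s (S k)) (s k))).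
  eapply Rle_trans; [apply wB_lipschitz; auto using norm_d_of_wbar_lt;
                     rewrite ?norm_vzero, ?norm_vsub_diag; lra |].
  rewrite <- (d_of_diag rho (wstar k)), vsub_d_of.
  apply Rmult_le_compat_l; [nra |].
  apply Rplus_le_compat_r, norm_d_of; lra.
Qed.

Lemma winf_dist_wstar_next :
  pdist (nz pb) (nmu pb) winf (wstar (S k)) <= lB * lH * ((err + lA * lamF_of pb Tn * step) / rho).
Proof.
  rewrite (pdist_pveq _ _ _ _ _ _ winf_eq_wB wstar_next_eq_wB).
  eapply Rle_trans; [apply wB_lipschitz; auto using norm_d_of_wbar_lt, norm_d_of_wstar_lt |].
  rewrite norm_vsub_diag, Rplus_0_r, vsub_d_of.
  apply Rmult_le_compat_l; [nra |].
  eapply Rle_trans; [apply (norm_d_of (nz pb)); lra |].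
  unfold Rdiv. apply Rmult_le_compat_r; [left; apply Rinv_0_lt_compat; lra |].
  eapply Rle_trans; [apply (pdist_triangle _ _ _ (wstar k)) |].
  rewrite (pdistC _ _ (wstar k)). pose proof wstar_drift. lra.
Qed.

Lemma zbar_dist_zinf :
  norm (nz pb) (vsub (fst (wbar k)) (zinf k)) <= err + lB * lH * (err / rho + step).
Proof.
  eapply Rle_trans; [apply (norm_fst_le_pdist _ (nmu pb) (wbar k) winf) |].
  eapply Rle_trans; [apply (pdist_triangle _ _ _ (wstar k)) |].
  rewrite (pdistC _ _ (wstar k)). pose proof winf_dist_wstar. lra.
Qed.

Hypothesis Hiter : tracking_iter pb dJ dG rho alpha c0 beta M s wbar.
Hypothesis HG : forall s' z z', inZ pb z -> inZ pb z' ->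
  norm (nmu pb) (vsub (Gf pb z s') (Gf pb z' s')) <= lG * norm (nz pb) (vsub z z').
Hypothesis Hiii : (1 + lH * lB / rho) * err + lH * lB * step < delta.

Lemma wbar_next_dist_winf :
  pdist (nz pb) (nmu pb) (wbar (S k)) winf
  <= (1 + rho * lG) * (Cc * Rpower (INR M) (- psi) * (err + lB * lH * (err / rho + step))).
Proof.
  destruct (Hiter k) as [_ [_ Hmu]]. destruct (Hiter (S k)) as [Hz1 _].
  eapply Rle_trans; [apply pdist_multiplier_update; [lra | apply HG; auto using zinf_in_Z | exact Hmu] |].
  apply Rmult_le_compat_l; [nra |].
  assert (Hm : 0 < Rpower (INR M) (- psi)) by apply exp_pos.
  eapply Rle_trans; [apply (proj2 (proj2 (HC k))) |].
  - eapply Rle_lt_trans; [apply zbar_dist_zinf |].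
    replace (err + lB * lH * (err / rho + step)) with ((1 + lH * lB / rho) * err + lH * lB * step)
      by (field; lra). exact Hiii.
  - apply Rmult_le_compat_l; [nra | apply zbar_dist_zinf].
Qed.

End TrackingStep.

Theorem mainTheorem10
  (pb : problem) (Hwf : wf_problem pb)
  (dJ : vec -> vec) (dG : nat -> vec -> vec) (Hgrad : grad_data pb dJ dG)
  (alpha c0 : nat -> R) (beta : R)
  (Halpha : forall i, (i < nP pb)%nat -> alpha i > 0)
  (Hc0 : forall i, (i < nP pb)%nat -> c0 i > 0) (Hbeta : beta > 1)
  (rho : R) (Hrho : rho > 0) (M : nat) (HM : (1 <= M)%nat)
  (Tn : nat -> R)
  (HTn : forall i, (i < nP pb)%nat -> is_opnorm (nq pb i) (np pb) (Tb pb i) (Tn i))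
  (lH : R) (HlH : lH > 0)
  (HH : forall mut w d s d' s',
      pdist (nz pb) (nmu pb) (Hmap pb dJ dG rho mut w d s) (Hmap pb dJ dG rho mut w d' s')
      <= lH * pdist (nmu pb) (np pb) (d, s) (d', s'))
  (lG : R) (HlG : lG > 0)
  (HG : forall s z z', inZ pb z -> inZ pb z' ->
      norm (nmu pb) (vsub (Gf pb z s) (Gf pb z' s)) <= lG * norm (nz pb) (vsub z z'))
  (s : nat -> vec) (HS : forall k, Sset pb (s k))
  (wstar : nat -> pvec) (Hwstar : forall k, KKT pb dJ dG (wstar k) (s k))
  (wbar : nat -> pvec) (Hiter : tracking_iter pb dJ dG rho alpha c0 beta M s wbar)
  (zinf : nat -> vec)
  (rA dA lA : R) (HrA : rA > 0) (HdA : dA > 0) (HlA : lA > 0)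
  (wA : nat -> vec -> pvec) (HA : hypA pb dJ dG s wstar wA rA dA lA)
  (rB qB lB dB : R) (HrB : rB > 0) (HqB : qB > 0) (HlB : lB > 0) (HdB : dB >= dA)
  (wB : nat -> vec -> vec -> pvec) (HB : hypB pb dJ dG rho s wstar wB rB qB lB dB)
  (Cc delta psi : R) (HCc : Cc > 0) (Hdelta : delta > 0) (Hpsi : psi > 0)
  (HC : hypC pb dJ dG rho alpha c0 beta M s wstar wbar wB zinf rB qB Cc delta psi)
  (k : nat)
  (Hi : norm (np pb) (vsub (s (S k)) (s k)) < rA /\
        norm (np pb) (vsub (s (S k)) (s k)) < rB /\
        lA * lamF_of pb Tn * norm (np pb) (vsub (s (S k)) (s k)) < qB * rho)
  (Hii : pdist (nz pb) (nmu pb) (wbar k) (wstar k) < qB * rho)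
  (Hiii : (1 + lH * lB / rho) * pdist (nz pb) (nmu pb) (wbar k) (wstar k)
          + lH * lB * norm (np pb) (vsub (s (S k)) (s k)) < delta) :
  pdist (nz pb) (nmu pb) (wbar (S k)) (wstar (S k))
  <= (Cc * (1 + rho * lG) * (1 + lB * lH / rho) * Rpower (INR M) (- psi) + lB * lH / rho)
       * pdist (nz pb) (nmu pb) (wbar k) (wstar k)
   + (Cc * (1 + rho * lG) * lB * lH * Rpower (INR M) (- psi)
       + lB * lH * lA * lamF_of pb Tn / rho)
       * norm (np pb) (vsub (s (S k)) (s k)).
Proof.
  destruct Hi as [HsA [HsB HsF]].
  set (winf := winf_of pb rho (zinf k) (wbar k) (s (S k))).
  set (err := pdist (nz pb) (nmu pb) (wbar k) (wstar k)) in *.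
  set (step := norm (np pb) (vsub (s (S k)) (s k))) in *.
  set (m := Rpower (INR M) (- psi)).
  apply Rle_trans with
    ((1 + rho * lG) * (Cc * m * (err + lB * lH * (err / rho + step)))
     + lB * lH * ((err + lA * lamF_of pb Tn * step) / rho)).
  - eapply Rle_trans; [apply (pdist_triangle _ _ _ winf) | apply Rplus_le_compat].
    + exact (wbar_next_dist_winf Hrho HS Hwstar HdA HlH HlB HqB HdB HH HB HsB
               HCc HlG HC Hii Hiter HG Hiii).
    + exact (winf_dist_wstar_next Hrho HS Hwstar HdA HlA HA HTn HsA HlH HlB HdB HH HB HsB HsF
               HC Hii).
  - right. field. lra.
Qed.
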